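(* Let $k\ge 4$, $n=2k-1$, $\lambda\in\overline{\mathcal{U}}_{T_n}$, and let $Y=\mathrm{KN}(S_\lambda)$ with hook lengths $h_{i,j}$. Write the elements of $S_\lambda$ increasingly as $0=s_0<s_1<\cdots$ and let $z$ be the index with $s_z=n-2$. Then for every $1\le i\le z$, $$h_{i,i}=2\,h_{i,z+1}.$$
   Context: A partition of $N$ into distinct parts is a sequence $\lambda=(\lambda_1<\dots<\lambda_t)$ of positive integers with sum $N$ and $t\ge 2$, identified with its set of parts. Missing parts: $\mathcal{M}_\lambda=\{1,\dots,\lambda_t\}\setminus\lambda$. $\lambda$ is refinable if two distinct missing parts sum to a part of $\lambda$, unrefinable otherwise; $\mathcal{U}_N$ is the set of unrefinable partitions of $N$. An element of $\mathcal{U}_N$ is maximal if its largest part is the maximum of the largest parts of elements of $\mathcal{U}_N$; $\widetilde{\mathcal{U}}_N$ is the set of these and $\overline{\mathcal{U}}_N=\{\lambda\in\widetilde{\mathcal{U}}_N:\#\mathcal{M}_\lambda=\lfloor\lambda_t/2\rfloor\}$. $T_n=n(n+1)/2$. For $\lambda\in\overline{\mathcal{U}}_{T_n}$ (with $n=2k-1$, $k\ge 4$) one knows $\lambda_t=2n-4$, $t=n-2$ and $n-2\notin\lambda$. $S_\lambda=\mathbb{N}_0\setminus\lambda$. The Keith–Nath transformation sends a set $S\subseteq\mathbb{N}_0$ with $0\in S$ and finite complement to the Young diagram $\mathrm{KN}(S)$ whose boundary is the lattice path that, starting at the origin, takes for $j=0,1,\dots,\max(\mathbb{N}_0\setminus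 S)$ an east step if $j\in S$ and a north step otherwise. Diagrams are in English convention; $h_{i,j}$ is the hook length of the cell in row $i$ (from the top) and column $j$ (from the left): (cells to its right in its row) + (cells below it in its column) + 1. *)

From mathcomp Require Import all_boot.
Set Implicit Arguments. Unset Strict Implicit. Unset Printing Implicit Defensive.

Definition T (n : nat) : nat := n * n.+1 %/ 2.

Definition is_dpart (N : nat) (l : seq nat) : bool :=
  [&& sorted ltn l, 0 \notin l, sumn l == N & 1 < size l].

Definition largest (l : seq nat) : nat := \max_(g <- l) g.

Definition missing (l : seq nat) : seq nat :=
  [seq m <- iota 1 (largest l) | m \notin l].

Definition refinable (l : seq nat) : bool :=
  has (fun a => has (fun b => (a != b) && (a + b \in l)) (missing l)) (missing l).

Definition unrefinable (N : nat) (l : seq nat) : bool :=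
  is_dpart N l && ~~ refinable l.

Definition maximal_unref (N : nat) (l : seq nat) : Prop :=
  unrefinable N l /\ (forall l', unrefinable N l' -> largest l' <= largest l).

Definition Ubar (N : nat) (l : seq nat) : Prop :=
  maximal_unref N l /\ size (missing l) = (largest l)./2.

Definition S_of (l : seq nat) : pred nat := fun s => s \notin l.

(* Keith--Nath lattice path of S, where m = max (N_0 \ S):
   for j = 0..m, [false] = east step (j in S), [true] = north step. *)
Definition KN_path (S : pred nat) (m : nat) : seq bool :=
  [seq ~~ S j | j <- iota 0 m.+1].

(* The Young diagram bounded (to its lower right) by the path, English
   convention: row lengths listed from the top row to the bottom row.
   The north step at position k of the path lies at x-coordinate
   (number of east steps before it); it bounds a row of that length;
   later north steps are higher rows. *)
Definition KN_shape (p : seq bool) : seq nat :=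
  rev [seq count negb (take k p) | k <- iota 0 (size p) & nth false p k].

(* cell (i,j) (1-indexed, row from top, column from left) belongs to the diagram *)
Definition in_diagram (sh : seq nat) (i j : nat) : bool :=
  [&& 0 < i, i <= size sh, 0 < j & j <= nth 0 sh i.-1].

Definition hook (sh : seq nat) (i j : nat) : nat :=
  (nth 0 sh i.-1 - j) + count (fun r => j <= r) (drop i sh) + 1.

(* Unrefinability together with #M = floor(L/2), L = lambda_t, forces each pair
   {a, L - a} with 2a < L to contain exactly one part, and L/2 to be missing when
   L is even.  Hence |lambda| = C(ceil(L/2), 2) + sum of (L - 2a) over the
   non-parts a < L/2, and |lambda| = T_n leaves room only for L <= 2n - 4 (for
   L = 2n - 3, resp. 2n - 2, the excess over L + C(n - 1, 2) would be 2, resp. 1,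
   while its terms are distinct odd, resp. even, numbers); the unrefinable
   partition {1, ..., n - 3, n + 1, 2n - 4} and maximality give L = 2c with
   c = n - 2 missing.  So S_lambda is mirror-symmetric on [0, 2c].
   In the Keith--Nath diagram the row of a part x and the column of a gap s < x
   cross in a cell with hook length x - s.  For s = s_(i-1) the parts above
   x = 2c - s mirror the gaps below s, so x labels row i, and the hooks in columns
   i and z + 1 are x - s = 2(c - s) and x - c = c - s. *)

From mathcomp Require Import all_boot zify.

Set Implicit Arguments.
Unset Strict Implicit.
Unset Printing Implicit Defensive.

Lemma sum_nat_pairs (F : nat -> nat) L :
  \sum_(0 <= a < L.+1) F a =
  \sum_(0 <= a < uphalf L) (F a + F (L - a)) + ~~ odd L * F L./2.
Proof.
have HL := uphalf_half L; set H := uphalf L in HL *.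
rewrite (big_cat_nat (leq0n H) (_ : H <= L.+1)); last by lia.
rewrite big_split -addnA /=; congr (_ + _).
rewrite [LHS]big_nat_rev -{1}[H]add0n big_addn.
rewrite (eq_bigr (fun a => F (L - a))) => [|a _]; last by congr F; lia.
have [oddL|evenL] := boolP (odd L).
  by rewrite (_ : L.+1 - H = H) ?addn0 //; rewrite HL oddL; lia.
rewrite (_ : L.+1 - H = H.+1); last by rewrite HL (negbTE evenL); lia.
by rewrite big_nat_recr //= mul1n; congr (_ + F _); rewrite HL (negbTE evenL); lia.
Qed.

Lemma eq_sum_leq (I : eqType) (r : seq I) (F G : I -> nat) :
  {in r, forall i, F i <= G i} ->
  \sum_(i <- r) F i = \sum_(i <- r) G i -> {in r, F =1 G}.
Proof.
move=> leFG eqFG.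
have : \sum_(i <- r | i \in r) (G i - F i) == 0.
  by rewrite sumnB // -!big_seq eqFG subnn.
rewrite sum_nat_seq_eq0 => /allP eq0 i ir; apply/eqP.
by rewrite eqn_leq leFG //= -subn_eq0; have /implyP := eq0 i ir; apply.
Qed.

Lemma count_mem_swap (T : eqType) (s t : seq T) :
  uniq s -> uniq t -> count (mem s) t = count (mem t) s.
Proof.
move=> us ut; rewrite -!size_filter.
apply/perm_size/uniq_perm; rewrite ?filter_uniq // => x.
by rewrite !mem_filter andbC.
Qed.

Lemma count_geq_uniq (l : seq nat) m : uniq l ->
  count (fun b => m <= b) l = count (fun b => m < b) l + (m \in l).
Proof.
elim: l => //= b t IH /andP[b_notin t_uniq]; rewrite in_cons IH //.
by have [->|ne] := eqVneq m b; rewrite ?(negbTE b_notin) /=; lia.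
Qed.

Lemma filter_mem_iota (l : seq nat) M :
  sorted ltn l -> {in l, forall x, x < M} -> [seq x <- iota 0 M | x \in l] = l.
Proof.
move=> sl ltM; apply: (irr_sorted_eq ltn_trans ltnn) => //.
  exact: (sorted_filter ltn_trans _ (iota_ltn_sorted 0 M)).
by move=> x; rewrite mem_filter mem_iota; case xl: (x \in l); rewrite ?andbF //= ltM.
Qed.

Lemma sumn_sortedE (l : seq nat) L :
  sorted ltn l -> {in l, forall x, x <= L} ->
  sumn l = \sum_(0 <= a < L.+1) a * (a \in l).
Proof.
move=> sl leL; rewrite -{1}(@filter_mem_iota l L.+1 sl) //.
rewrite sumnE big_filter big_mkcond.
by apply: eq_bigr => a _; case: (a \in l); rewrite ?muln1 ?muln0.
Qed.

Lemma sorted_ltn_splitE (l : seq nat) x : sorted ltn l -> x \in l ->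
  l = [seq b <- l | b < x] ++ x :: [seq b <- l | x < b].
Proof.
move=> + xl; case/splitPr: xl => l1 l2.
rewrite (sorted_pairwise ltn_trans) pairwise_cat /= allrel_consr.
case/and4P=> /andP[l1_lt _] _ l2_gt _.
rewrite !filter_cat /= ltnn (all_filterP l1_lt) (all_filterP l2_gt).
have filter_nil (s : seq nat) (a : pred nat) :
    {in s, forall b, ~~ a b} -> filter a s = [::].
  by move=> not_a; apply/eqP/negPn; rewrite -has_filter; apply/hasPn.
rewrite !filter_nil ?cats0 // => b b_in; [move/allP: l1_lt | move/allP: l2_gt];
  by move=> /(_ b b_in) /=; lia.
Qed.

Lemma rev_sorted_ltn_at (l : seq nat) x : sorted ltn l -> x \in l ->
  [/\ count (fun b => x < b) l < size l,
      nth 0 (rev l) (count (fun b => x < b) l) = x &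
      drop (count (fun b => x < b) l).+1 (rev l) = rev [seq b <- l | b < x]].
Proof.
move=> sl xl.
have rev_l : rev l = rev [seq b <- l | x < b] ++ x :: rev [seq b <- l | b < x].
  by rewrite {1}(sorted_ltn_splitE sl xl) rev_cat rev_cons cat_rcons.
have size_above : size (rev [seq b <- l | x < b]) = count (fun b => x < b) l.
  by rewrite size_rev size_filter.
rewrite -size_rev rev_l nth_cat drop_cat size_cat size_above ltnn subnn.
split=> //; first by rewrite addnS ltnS leq_addr.
by rewrite ifN ?subSnn /= ?drop0 // ltnNge leqnSn.
Qed.

Lemma nth_filter_iota_last (P : pred nat) c z : P c ->
  z < size (filter P (iota 0 c.+1)) -> nth 0 (filter P (iota 0 c.+1)) z = c ->
  z = count P (iota 0 c).
Proof.
move=> Pc; rewrite -[c.+1]addn1 iotaD filter_cat /= Pc size_cat nth_cat /= => z_lt.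
case: ltnP => [lt_z | ge_z]; last by move=> _; rewrite size_filter in z_lt ge_z; lia.
by move=> nth_c; have := mem_nth 0 lt_z; rewrite nth_c mem_filter mem_iota; lia.
Qed.

Lemma largest_in (l : seq nat) : l != [::] -> largest l \in l.
Proof.
rewrite /largest; elim: l => // x [|y s] IH _; first by rewrite big_seq1 mem_head.
rewrite big_cons /maxn; case: ifP => _; last exact: mem_head.
by rewrite in_cons IH ?orbT.
Qed.

Lemma le_largest (l : seq nat) : {in l, forall x, x <= largest l}.
Proof. by move=> x xl; apply: leq_bigmax_seq. Qed.

Lemma T_bin2 n : T n = 'C(n.+1, 2).
Proof. by rewrite /T bin2 divn2 mulnC. Qed.

Lemma unrefinable_complement (l : seq nat) :
  0 \notin l -> ~~ refinable l -> size (missing l) = (largest l)./2 ->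
  (forall a, a < uphalf (largest l) -> (largest l - a \in l) = (a \notin l)) /\
  (~~ odd (largest l) -> (largest l)./2 \notin l).
Proof.
have [->|l_nil] := eqVneq l [::]; first by rewrite /largest big_nil.
move=> l0 nref size_missing; have L_in := largest_in l_nil.
move: size_missing nref L_in; rewrite /refinable /missing; set L := largest l.
move=> size_missing nref L_in; pose pair a := (a \notin l) + (L - a \notin l).
have pair_le1 : {in index_iota 0 (uphalf L), forall a, pair a <= 1}.
  move=> a; rewrite mem_index_iota gtn_uphalf_double /pair => aL.
  case: (boolP (a \in l)) => [_ | a_notin]; first by case: (_ \notin l).
  rewrite add1n ltnS leqNgt lt0b negbK; apply: contraR nref => La_notin.
  have a_gt0 : 0 < a by case: a aL a_notin La_notin => // _ _; rewrite subn0 L_in.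
  apply/hasP; exists a; first by rewrite mem_filter a_notin mem_iota; lia.
  apply/hasP; exists (L - a); first by rewrite mem_filter La_notin mem_iota; lia.
  by rewrite subnKC ?L_in ?andbT; lia.
have sum_notin : \sum_(0 <= a < L.+1) (a \notin l) = uphalf L + ~~ odd L.
  rewrite big_ltn // l0 uphalf_half (_ : odd L + _ + _ = 1 + L./2); last first.
    by case: (odd L); lia.
  rewrite -size_missing size_filter -sum1_count (big_mkcond (fun j => j \notin l)).
  by rewrite /index_iota subSS subn0; congr (1 + _).
rewrite sum_nat_pairs (eq_bigr pair) // in sum_notin.
have sum_pairs : \sum_(0 <= a < uphalf L) pair a = \sum_(0 <= a < uphalf L) 1.
  have : \sum_(0 <= a < uphalf L) pair a <= \sum_(0 <= a < uphalf L) 1.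
    by rewrite !big_seq; apply: leq_sum pair_le1.
  rewrite sum_nat_const_nat; move: sum_notin.
  by case: (odd L) (L./2 \notin l) => [] [] /=; lia.
split=> [a aH | evenL].
  have /(_ a) := eq_sum_leq pair_le1 sum_pairs.
  rewrite mem_index_iota aH /pair => /(_ isT).
  by case: (a \in l); case: (L - a \in l) => //; apply.
move: sum_notin; rewrite sum_pairs sum_nat_const_nat evenL.
by case: (_ \notin l) => //=; lia.
Qed.

Lemma sumn_complement (l : seq nat) L :
  sorted ltn l -> {in l, forall x, x <= L} ->
  (forall a, a < uphalf L -> (L - a \in l) = (a \notin l)) ->
  (~~ odd L -> L./2 \notin l) ->
  sumn l = 'C(uphalf L, 2) + \sum_(0 <= a < uphalf L) (a \notin l) * (L - a.*2).
Proof.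
move=> sl leL sym mid; rewrite (sumn_sortedE sl leL) sum_nat_pairs.
rewrite (_ : ~~ odd L * _ = 0); last first.
  by case: (boolP (odd L)) => [|/mid/negbTE->]; rewrite ?muln0.
rewrite addn0 -bin2_sum -big_split /=; apply: eq_big_nat => a /andP[_ aH].
by rewrite sym //; move: aH; rewrite gtn_uphalf_double; case: (a \in l) => /=; lia.
Qed.

Lemma complement_sum_bound n (l : seq nat) L : 2 < n -> 0 \notin l ->
  T n = 'C(uphalf L, 2) + \sum_(0 <= a < uphalf L) (a \notin l) * (L - a.*2) ->
  L <= (n - 2).*2.
Proof.
move=> n_gt2 l0; rewrite leqNgt T_bin2 binS bin1 => sumE; apply/negP => L_gt.
have HL := uphalfK L; set H := uphalf L in sumE HL.
rewrite big_ltn ?l0 /= ?mul1n ?subn0 in sumE; last by case: (odd L) HL; lia.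
set E := \sum_(1 <= a < H) _ in sumE.
have [L_ge|L_lt] := leqP n.*2.-1 L.
  have n_le : n <= H by case: (odd L) HL; lia.
  by have := leq_bin2l 2 n_le; lia.
have H_eq : H = n.-1 by case: (odd L) HL; lia.
have binH : 'C(n, 2) = 'C(H, 2) + H.
  by rewrite H_eq -{1}(ltn_predK n_gt2) binS bin1.
have [oddL|evenL] := boolP (odd L); rewrite ?oddL ?(negbTE evenL) in HL.
  have E2 : E = 2 by lia.
  move: E2; rewrite /E H_eq -(ltn_predK (_ : 1 < n.-1)); last by lia.
  rewrite big_nat_recr /=; last by lia.
  set E' := \sum_(1 <= a < n.-2) _.
  have : (E' == 0) || (2 < E').
    rewrite /E' big_nat_cond; apply: (big_ind (fun x => (x == 0) || (2 < x))) => //.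
      by move=> x y /orP[/eqP->|?] /orP[/eqP->|?]; rewrite ?addn0 //; apply/orP; lia.
    by move=> a /andP[/andP[_ a_lt] _]; case: (a \notin l); apply/orP; lia.
  by case: (_ \notin l); case/orP; lia.
have E1 : E = 1 by lia.
have : 2 %| E.
  apply: dvdn_sum => a _; rewrite (_ : L - a.*2 = (H - a) * 2); last by lia.
  by rewrite !dvdn_mull.
by rewrite E1.
Qed.

Lemma unrefinable_witness m : 2 < m ->
  unrefinable (T m.+3) (iota 1 m ++ [:: m.+4; m.*2.+2]).
Proof.
move=> m_gt2; set w := _ ++ _.
have mem_w x : (x \in w) = (0 < x <= m) || (x == m.+4) || (x == m.*2.+2).
  by rewrite mem_cat mem_iota !inE orbA add1n.
apply/andP; split.
  apply/and4P; split.
  - rewrite /w (sorted_pairwise ltn_trans) pairwise_cat /= !andbT; apply/and3P; split.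
    + by apply/allrelP => x y; rewrite mem_iota !inE => ? /orP[] /eqP->; lia.
    + by rewrite -(sorted_pairwise ltn_trans) iota_ltn_sorted.
    + lia.
  - by rewrite mem_w.
  - have sum_iota : sumn (iota 1 m) = 'C(m.+1, 2).
      by rewrite -bin2_sum big_ltn //= add0n sumnE /index_iota subSS subn0.
    rewrite T_bin2 sumn_cat sum_iota /=; apply/eqP; rewrite !binS !bin1 ?bin0; lia.
  - by rewrite size_cat size_iota /=; lia.
apply/hasPn => a; rewrite mem_filter mem_w => /andP[a_notin _].
apply/hasPn => b; rewrite mem_filter mem_w => /andP[b_notin _].
by rewrite mem_w; apply/negP => /andP[]; move: a_notin b_notin; lia.
Qed.

Lemma maximal_unref_largest_ge n (l : seq nat) :
  5 < n -> maximal_unref (T n) l -> (n - 2).*2 <= largest l.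
Proof.
move=> n_gt5 [_ max_l]; have [m n_eq] : exists m, n = m.+3 by exists (n - 3); lia.
rewrite n_eq (_ : (m.+3 - 2).*2 = m.*2.+2) in max_l *; last by lia.
apply: leq_trans (max_l _ (unrefinable_witness _)); last by lia.
by apply: le_largest; rewrite mem_cat !inE eqxx !orbT.
Qed.

Definition S_rank (l : seq nat) (y : nat) : nat := count (S_of l) (iota 0 y).

Lemma S_rankS l y : S_rank l y.+1 = S_rank l y + S_of l y.
Proof. by rewrite /S_rank -addn1 iotaD count_cat /= addn0. Qed.

Lemma leq_S_rank l : {homo S_rank l : y y' / y <= y'}.
Proof.
by move=> y y' le_yy'; rewrite /S_rank -(subnKC le_yy') iotaD count_cat leq_addr.
Qed.

Lemma ltn_S_rank l s b : S_of l s -> (S_rank l s < S_rank l b) = (s < b).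
Proof.
move=> sS; case: (ltnP s b) => [lt_sb | le_bs].
  by have := leq_S_rank l lt_sb; rewrite S_rankS sS addn1.
by apply/negbTE; rewrite -leqNgt leq_S_rank.
Qed.

Lemma exists_S_rank l m v :
  v < S_rank l m -> exists s, [/\ s < m, S_of l s & S_rank l s = v].
Proof.
elim: m => // m IH; rewrite S_rankS => v_lt.
have [/IH [s [s_lt sS s_rank]] | v_ge] := ltnP v (S_rank l m).
  by exists s; split; rewrite // ltnW.
have mS : S_of l m by case: (S_of l m) v_lt => //=; lia.
by exists m; split => //; rewrite mS in v_lt; lia.
Qed.

Lemma count_ltn_S_rank l y : uniq l -> count (fun b => b < y) l + S_rank l y = y.
Proof.
move=> ul; rewrite (eq_count (a2 := mem (iota 0 y))) => [|b]; last first.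
  by rewrite inE mem_iota.
by rewrite count_mem_swap ?iota_uniq // count_predC size_iota.
Qed.

Section KeithNathDiagram.

Variables (l : seq nat) (L : nat).
Hypotheses (l_sorted : sorted ltn l) (l_le : {in l, forall x, x <= L}).

Local Notation Y := (KN_shape (KN_path (S_of l) L)).

Lemma KN_shapeE : Y = map (S_rank l) (rev l).
Proof.
rewrite /KN_shape /KN_path size_map size_iota map_rev; congr rev.
have -> : [seq k <- iota 0 L.+1 | nth false [seq ~~ S_of l j | j <- iota 0 L.+1] k] = l.
  rewrite -[RHS](@filter_mem_iota l L.+1) //; apply: eq_in_filter => k.
  rewrite mem_iota => /andP[_ k_lt].
  by rewrite (nth_map 0) ?size_iota // nth_iota // negbK.
apply/eq_in_map => x /l_le x_le.
rewrite -map_take take_iota count_map (minn_idPl (leqW x_le)).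
by apply: eq_count => j; rewrite /= negbK.
Qed.

Lemma in_KN_diagram x j : x \in l -> 0 < j <= S_rank l x ->
  in_diagram Y (count (fun b => x < b) l).+1 j.
Proof.
move=> xl j_range; have [lt_size nth_x _] := rev_sorted_ltn_at l_sorted xl.
rewrite /in_diagram KN_shapeE size_map size_rev (nth_map 0) ?size_rev // nth_x lt_size.
exact: j_range.
Qed.

Lemma hook_KN x s : x \in l -> S_of l s -> s < x ->
  hook Y (count (fun b => x < b) l).+1 (S_rank l s).+1 = x - s.
Proof.
move=> xl sS lt_sx; have [lt_size nth_x drop_x] := rev_sorted_ltn_at l_sorted xl.
rewrite KN_shapeE /hook -map_drop (nth_map 0) ?size_rev // nth_x drop_x.
rewrite count_map count_rev count_filter.
rewrite (eq_count (a2 := fun b => s < b < x)) => [|b]; last by rewrite /= ltn_S_rank.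
have l_uniq := sorted_uniq ltn_trans ltnn l_sorted.
have := count_ltn_S_rank x l_uniq; have := count_ltn_S_rank s.+1 l_uniq.
have count_split t : count (fun b => b < x) t =
    count (fun b => b < s.+1) t + count (fun b => s < b < x) t.
  by elim: t => //= b t ->; lia.
by rewrite count_split S_rankS sS; have := ltn_S_rank x sS; rewrite lt_sx; lia.
Qed.

End KeithNathDiagram.

Section SelfComplementary.

Variables (l : seq nat) (c : nat).
Hypotheses (l_sorted : sorted ltn l) (l_le : {in l, forall x, x <= c.*2}).
Hypothesis l_sym : forall a, a < c -> (c.*2 - a \in l) = (a \notin l).
Hypothesis c_notin : c \notin l.

Lemma count_gtn_mirror y : y <= c -> count (fun b => c.*2 - y < b) l = S_rank l y.
Proof.
elim: y => [_|y IH lt_yc].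
  by rewrite (eq_in_count (a2 := pred0)) ?count_pred0 // => b /l_le /=; lia.
rewrite (eq_count (a2 := fun b => c.*2 - y <= b)) => [|b]; last by lia.
rewrite count_geq_uniq ?(sorted_uniq ltn_trans ltnn) // IH ?l_sym ?S_rankS //; lia.
Qed.

Lemma KN_hook_double s : S_of l s -> s < c ->
  let Y := KN_shape (KN_path (S_of l) c.*2) in
  let i := (S_rank l s).+1 in
  in_diagram Y i (S_rank l c).+1 /\ hook Y i i = 2 * hook Y i (S_rank l c).+1.
Proof.
move=> sS lt_sc Y i; set x := c.*2 - s.
have x_in : x \in l by rewrite l_sym.
have row_x : (count (fun b => x < b) l).+1 = i by rewrite count_gtn_mirror // ltnW.
have lt_cx : c < x by rewrite /x; lia.
split; first by rewrite -row_x in_KN_diagram // ltn_S_rank.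
have := hook_KN l_sorted l_le x_in sS (_ : s < x).
have := hook_KN l_sorted l_le x_in c_notin lt_cx.
by rewrite row_x /x => -> ->; lia.
Qed.

End SelfComplementary.

Theorem lemma3p8 (k n : nat) (l : seq nat) :
  4 <= k -> n = 2 * k - 1 -> Ubar (T n) l ->
  forall z : nat,
    (* s_z = n - 2, where s_0 < s_1 < ... enumerate S_lambda increasingly
       (the elements of S_lambda below n-1 form an initial segment) *)
    z < size [seq s <- iota 0 n.-1 | S_of l s] ->
    nth 0 [seq s <- iota 0 n.-1 | S_of l s] z = n - 2 ->
    forall i : nat, 1 <= i <= z ->
      let Y := KN_shape (KN_path (S_of l) (largest l)) in
      in_diagram Y i z.+1 /\ hook Y i i = 2 * hook Y i z.+1.
Proof.
move=> k_ge4 n_eq [l_max l_missing] z z_lt z_nth i /andP[i_gt0 i_le] Y.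
have /andP[/and4P[l_sorted l0 /eqP l_sum _] nref] := l_max.1.
have l_le : {in l, forall x, x <= largest l} := @le_largest l.
have [l_sym l_mid] := unrefinable_complement l0 nref l_missing.
have L_le : largest l <= (n - 2).*2.
  apply: complement_sum_bound l0 _; first by lia.
  by rewrite -l_sum (sumn_complement l_sorted l_le).
have L_ge := maximal_unref_largest_ge (_ : 5 < n) l_max.
set c := n - 2 in z_nth L_le L_ge.
have L_eq : largest l = c.*2 by lia.
rewrite /Y L_eq uphalf_double doubleK odd_double in l_le l_sym l_mid *.
have c_notin : c \notin l by exact: l_mid.
rewrite (_ : n.-1 = c.+1) in z_lt z_nth; last by lia.
have z_eq : z = S_rank l c := nth_filter_iota_last c_notin z_lt z_nth.
have lt_i : i.-1 < S_rank l c by rewrite -z_eq; lia.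
have [s [lt_sc sS s_rank]] := exists_S_rank lt_i.
have := KN_hook_double l_sorted l_le l_sym c_notin sS lt_sc.
by rewrite s_rank prednK // -z_eq.
Qed.
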